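(* Let $\mathcal{A}=\{f\in C^\infty(]0,1[,]0,1[)\mid \lim_{x\to1}f(x)=1,\ \lim_{x\to0}f(x)=0\}$ and $\mathcal{D}=\{f\in\mathcal{A}\mid \inf_{x\in]0,1[}f'(x)>0 \text{ and } \sup_{x\in]0,1[}f'(x)>0\}$, a group under composition, equipped with the Fr\''olicher (diffeological) structure induced from the Fr\'echet space $C^\infty(]0,1[,\mathbb{R})$. Then there exists a smooth path $v$ in $T_{\mathrm{id}}\mathcal{D}$ such that no smooth path $g$ in $\mathcal{D}$ satisfies $\partial_t g\circ g^{-1}=v$.
   Context: $C^\infty(]0,1[,\mathbb{R})$ carries the Fr\'echet topology of the seminorms $\|f\|_{n,k}=\sup_{\frac{1}{n+1}\le x\le\frac{n}{n+1}}|f^{(k)}(x)|$. The smooth maps into $\mathcal{D}$ (plots) are those that are smooth into $C^\infty(]0,1[,\mathbb{R})$ with values in $\mathcal{D}$. $T_{\mathrm{id}}\mathcal{D}$ is the tangent space at the identity, i.e. the set of derivatives at $0$ of smooth paths in $\mathcal{D}$ through $\mathrm{id}$; it is a subset of $C^\infty(]0,1[,\mathbb{R})$. *)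

From Stdlib Require Import Reals Lra ClassicalEpsilon.
From Coquelicot Require Import Coquelicot.
Open Scope R_scope.

(* An element of C^oo(]0,1[, R) is represented by a total function R -> R;
   only its values on ]0,1[ matter. *)
Definition in01 (x : R) : Prop := 0 < x < 1.

Definition smooth01 (f : R -> R) : Prop :=
  forall (k : nat) (x : R), in01 x -> ex_derive_n f k x.

(* Seminorm ||f||_{n,k} = sup_{1/(n+1) <= x <= n/(n+1)} |f^(k)(x)| *)
Definition in_Kn (n : nat) (x : R) : Prop :=
  1 / (INR n + 1) <= x <= INR n / (INR n + 1).

Definition frechet_deriv (c : R -> R -> R) (t : R) (d : R -> R) : Prop :=
  forall (n k : nat) (eps : R), 0 < eps ->
  exists delta : R, 0 < delta /\
    forall h : R, h <> 0 -> Rabs h < delta ->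
    forall x : R, in_Kn n x ->
      Rabs (Derive_n (fun y => (c (t + h) y - c t y) / h) k x
            - Derive_n d k x) <= eps.

(* Smooth (C^oo) curve R -> C^oo(]0,1[,R): all iterated Frechet derivatives
   exist (continuity of each follows from differentiability of the next). *)
Definition smooth_curve (c : R -> R -> R) : Prop :=
  exists cs : nat -> R -> R -> R,
    (forall t x, in01 x -> cs O t x = c t x) /\
    (forall j t, smooth01 (cs j t)) /\
    (forall j t, frechet_deriv (cs j) t (cs (S j) t)).

Definition inA (f : R -> R) : Prop :=
  smooth01 f /\ (forall x, in01 x -> in01 (f x)) /\
  filterlim f (at_left 1) (locally 1) /\
  filterlim f (at_right 0) (locally 0).

Definition inD (f : R -> R) : Prop :=
  inA f /\
  (exists c, 0 < c /\ forall x, in01 x -> c <= Derive f x) /\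
  (exists M, forall x, in01 x -> Derive f x <= M).

Definition smooth_path_D (g : R -> R -> R) : Prop :=
  smooth_curve g /\ forall t, inD (g t).

Definition in_TidD (v0 : R -> R) : Prop :=
  exists g, smooth_path_D g /\ (forall x, in01 x -> g 0 x = x) /\
    frechet_deriv g 0 v0.

(* inverse on ]0,1[ (the genuine inverse for elements of D) *)
Definition inv01 (f : R -> R) (y : R) : R :=
  epsilon (inhabits 0) (fun x => in01 x /\ f x = y).

From Stdlib Require Import Reals Lra Psatz ClassicalEpsilon.
From Coquelicot Require Import Coquelicot.
Open Scope R_scope.

(* The constant curve [v t = id] does the job.  It is tangent to [D] at the
   identity along [s |-> Gf (damp s)], a path of diffeomorphisms of ]0,1[ with
   velocity [x |-> x] at [s = 0]; its smoothness as a curve in the Frechet space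
   follows from a symbolic calculus of rational expressions in [(s, x)].
   But a flow of [v] would move [1/2] by [phi' = phi], i.e. like [e^t / 2],
   and so leave ]0,1[ in finite time. *)

(* Rational expressions in a time variable [s] and a space variable [x],
   reified so that partial derivatives of all orders can be computed
   symbolically and bounded uniformly on the compacts [in_Kn n]. *)
Inductive expr :=
  | Xv | Sv | Cst (c : R) | Add (a b : expr) | Mul (a b : expr) | Inv (a : expr).

Fixpoint eval (e : expr) (s x : R) : R :=
  match e with
  | Xv => x | Sv => s | Cst c => c
  | Add a b => eval a s x + eval b s x
  | Mul a b => eval a s x * eval b s x
  | Inv a => / eval a s x
  end.

Fixpoint dx (e : expr) : expr :=
  match e with
  | Xv => Cst 1 | Sv | Cst _ => Cst 0
  | Add a b => Add (dx a) (dx b)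
  | Mul a b => Add (Mul (dx a) b) (Mul a (dx b))
  | Inv a => Mul (Mul (Cst (-1)) (dx a)) (Mul (Inv a) (Inv a))
  end.

Fixpoint ds (e : expr) : expr :=
  match e with
  | Sv => Cst 1 | Xv | Cst _ => Cst 0
  | Add a b => Add (ds a) (ds b)
  | Mul a b => Add (Mul (ds a) b) (Mul a (ds b))
  | Inv a => Mul (Mul (Cst (-1)) (ds a)) (Mul (Inv a) (Inv a))
  end.

Definition dxn (k : nat) : expr -> expr := Nat.iter k dx.
Definition dsn (k : nat) : expr -> expr := Nat.iter k ds.

Fixpoint admissible (e : expr) : Prop :=
  match e with
  | Add a b | Mul a b => admissible a /\ admissible b
  | Inv a => admissible a /\ (forall s x, in01 x -> eval a s x <> 0) /\
      (forall n, exists m, 0 < m /\ forall s x, in_Kn n x -> m <= Rabs (eval a s x))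
  | _ => True
  end.

Lemma admissible_dx e : admissible e -> admissible (dx e).
Proof. induction e; simpl; tauto. Qed.

Lemma admissible_ds e : admissible e -> admissible (ds e).
Proof. induction e; simpl; tauto. Qed.

Lemma admissible_dxn k e : admissible e -> admissible (dxn k e).
Proof. induction k; simpl; auto using admissible_dx. Qed.

Lemma admissible_dsn k e : admissible e -> admissible (dsn k e).
Proof. induction k; simpl; auto using admissible_ds. Qed.

Lemma is_derive_eval_x e s x : admissible e -> in01 x ->
  is_derive (fun y => eval e s y) x (eval (dx e) s x).
Proof.
  intros W Hx; induction e; simpl in *.
  - exact (@is_derive_id R_AbsRing _).
  - exact (@is_derive_const R_AbsRing R_NormedModule _ _).
  - exact (@is_derive_const R_AbsRing R_NormedModule _ _).
  - apply (is_derive_plus (fun y => eval e1 s y) (fun y => eval e2 s y)); tauto.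
  - apply (is_derive_mult (fun y => eval e1 s y) (fun y => eval e2 s y)); try tauto.
    intros; apply Rmult_comm.
  - destruct W as [W [Hnz _]].
    replace (-1 * eval (dx e) s x * (/ eval e s x * / eval e s x))
      with (- eval (dx e) s x / eval e s x ^ 2) by (field; auto).
    exact (is_derive_inv _ x _ (IHe W) (Hnz s x Hx)).
Qed.

Lemma is_derive_eval_s e s x : admissible e -> in01 x ->
  is_derive (fun r => eval e r x) s (eval (ds e) s x).
Proof.
  intros W Hx; induction e; simpl in *.
  - exact (@is_derive_const R_AbsRing R_NormedModule _ _).
  - exact (@is_derive_id R_AbsRing _).
  - exact (@is_derive_const R_AbsRing R_NormedModule _ _).
  - apply (is_derive_plus (fun r => eval e1 r x) (fun r => eval e2 r x)); tauto.
  - apply (is_derive_mult (fun r => eval e1 r x) (fun r => eval e2 r x)); try tauto.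
    intros; apply Rmult_comm.
  - destruct W as [W [Hnz _]].
    replace (-1 * eval (ds e) s x * (/ eval e s x * / eval e s x))
      with (- eval (ds e) s x / eval e s x ^ 2) by (field; auto).
    exact (is_derive_inv _ s _ (IHe W) (Hnz s x Hx)).
Qed.

Lemma eval_dx_ds e s x : eval (dx (ds e)) s x = eval (ds (dx e)) s x.
Proof.
  induction e; simpl in *; try ring.
  - rewrite IHe1, IHe2; ring.
  - rewrite IHe1, IHe2; ring.
  - rewrite IHe; ring.
Qed.

Lemma in01_locally x : in01 x -> locally x in01.
Proof.
  intros [H0 H1].
  assert (Hr : 0 < Rmin x (1 - x)) by (apply Rmin_glb_lt; lra).
  exists (mkposreal _ Hr). intros y Hy.
  change (Rabs (y - x) < Rmin x (1 - x)) in Hy.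
  generalize (Rmin_l x (1 - x)) (Rmin_r x (1 - x)).
  apply Rabs_def2 in Hy. unfold in01; lra.
Qed.

Lemma in_Kn_in01 n x : in_Kn n x -> in01 x.
Proof.
  unfold in_Kn, in01; intros [H1 H2].
  assert (0 <= INR n) by apply pos_INR.
  assert (0 < 1 / (INR n + 1)) by (apply Rdiv_lt_0_compat; lra).
  split; [lra|].
  apply Rle_lt_trans with (1 := H2), (Rmult_lt_reg_r (INR n + 1)); [lra|].
  unfold Rdiv; rewrite Rmult_assoc, Rinv_l by lra. lra.
Qed.

Lemma in_Kn_gap n x : in_Kn n x -> 1 / (INR n + 1) <= 1 - x.
Proof.
  unfold in_Kn; intros [_ H].
  assert (0 <= INR n) by apply pos_INR.
  replace (1 / (INR n + 1)) with (1 - INR n / (INR n + 1)) by (field; lra). lra.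
Qed.

Lemma Derive_n_of_derivative_chain (f : R -> R) (fd : nat -> R -> R) :
  (forall x, in01 x -> fd O x = f x) ->
  (forall k x, in01 x -> is_derive (fd k) x (fd (S k) x)) ->
  forall k x, in01 x -> ex_derive_n f k x /\ Derive_n f k x = fd k x.
Proof.
  intros H0 HS k. induction k as [|k IHk]; intros x Hx.
  - split; [exact I | symmetry; auto].
  - assert (L : locally x (fun y => fd k y = Derive_n f k y)).
    { apply filter_imp with (2 := in01_locally x Hx). intros y Hy.
      symmetry; apply IHk; auto. }
    split.
    + apply (ex_derive_ext_loc _ _ _ L). eexists; apply HS; auto.
    + simpl. rewrite <- (Derive_ext_loc _ _ _ L).
      apply is_derive_unique, HS; auto.
Qed.

Lemma Derive_n_eval e s k x : admissible e -> in01 x ->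
  ex_derive_n (fun y => eval e s y) k x /\
  Derive_n (fun y => eval e s y) k x = eval (dxn k e) s x.
Proof.
  intros W. revert x. apply (Derive_n_of_derivative_chain _ (fun k y => eval (dxn k e) s y)).
  - reflexivity.
  - intros j y Hy. apply is_derive_eval_x, Hy. apply admissible_dxn, W.
Qed.

Lemma eval_dx_ext e1 e2 s x : admissible e1 -> admissible e2 ->
  (forall y, in01 y -> eval e1 s y = eval e2 s y) ->
  in01 x -> eval (dx e1) s x = eval (dx e2) s x.
Proof.
  intros W1 W2 E Hx.
  assert (L : locally x (fun y => eval e1 s y = eval e2 s y)).
  { apply filter_imp with (2 := in01_locally x Hx). auto. }
  assert (D1 := is_derive_ext_loc _ _ _ _ L (is_derive_eval_x e1 s x W1 Hx)).
  rewrite <- (is_derive_unique _ _ _ D1).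
  apply is_derive_unique, is_derive_eval_x; auto.
Qed.

Lemma eval_dxn_ds k e s x : admissible e -> in01 x ->
  eval (dxn k (ds e)) s x = eval (ds (dxn k e)) s x.
Proof.
  intros W; revert x. induction k as [|k IHk]; intros x Hx; [reflexivity|].
  simpl. rewrite <- eval_dx_ds.
  apply eval_dx_ext; auto.
  - apply admissible_dxn, admissible_ds, W.
  - apply admissible_ds, admissible_dxn, W.
Qed.

Lemma eval_bounded e n s0 : admissible e -> exists M, forall s x,
  Rabs (s - s0) <= 1 -> in_Kn n x -> Rabs (eval e s x) <= M.
Proof.
  intros W. induction e; simpl in *.
  - exists 1. intros s x _ Hx. apply in_Kn_in01 in Hx. unfold in01 in Hx.
    rewrite Rabs_pos_eq; lra.
  - exists (Rabs s0 + 1). intros s x Hs _.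
    replace s with (s0 + (s - s0)) by ring.
    eapply Rle_trans; [apply Rabs_triang|]. lra.
  - exists (Rabs c). intros; lra.
  - destruct W as [W1 W2], (IHe1 W1) as [M1 H1], (IHe2 W2) as [M2 H2].
    exists (M1 + M2). intros s x Hs Hx.
    eapply Rle_trans; [apply Rabs_triang|].
    specialize (H1 s x Hs Hx); specialize (H2 s x Hs Hx); lra.
  - destruct W as [W1 W2], (IHe1 W1) as [M1 H1], (IHe2 W2) as [M2 H2].
    exists (M1 * M2). intros s x Hs Hx. rewrite Rabs_mult.
    apply Rmult_le_compat; auto using Rabs_pos.
  - destruct W as [_ [Hnz Hgap]], (Hgap n) as [m [Hm Hb]].
    exists (/ m). intros s x _ Hx.
    assert (eval e s x <> 0) by (apply Hnz, (in_Kn_in01 n), Hx).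
    rewrite Rabs_inv. apply Rinv_le_contravar; auto.
Qed.

Lemma difference_quotient_error (P P' P'' : R -> R) t M h :
  (forall r, Rabs (r - t) <= 1 -> is_derive P r (P' r)) ->
  (forall r, Rabs (r - t) <= 1 -> is_derive P' r (P'' r)) ->
  (forall r, Rabs (r - t) <= 1 -> Rabs (P'' r) <= M) ->
  h <> 0 -> Rabs h <= 1 ->
  Rabs ((P (t + h) - P t) / h - P' t) <= M * Rabs h.
Proof.
  intros D1 D2 B Hh Hh1.
  replace (Rabs h) with (Rabs (t + h - t)) in * by (f_equal; ring).
  destruct (MVT_cor4 P P' t 1 D1 (t + h) Hh1) as [c [E Hc]].
  destruct (MVT_cor4 P' P'' t 1 D2 c ltac:(lra)) as [d [E2 Hd]].
  replace ((P (t + h) - P t) / h - P' t) with (P' c - P' t)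
    by (rewrite E; field_simplify_eq; [ring|exact Hh]).
  rewrite E2, Rabs_mult.
  apply Rmult_le_compat; auto using Rabs_pos with real.
  apply B; lra.
Qed.

Lemma Derive_n_difference_quotient e t h k x : admissible e -> in01 x ->
  Derive_n (fun y => (eval e (t + h) y - eval e t y) / h) k x
  = (eval (dxn k e) (t + h) x - eval (dxn k e) t x) / h.
Proof.
  intros W Hx.
  apply (Derive_n_of_derivative_chain _
    (fun k y => (eval (dxn k e) (t + h) y - eval (dxn k e) t y) / h)); auto.
  intros j y Hy. simpl. unfold Rdiv.
  apply (is_derive_ext (fun y => / h * (eval (dxn j e) (t + h) y - eval (dxn j e) t y))).
  { intros z. apply Rmult_comm. }
  rewrite Rmult_comm. apply is_derive_scal.
  apply (is_derive_minus (fun y => eval (dxn j e) (t + h) y) (fun y => eval (dxn j e) t y));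
    apply is_derive_eval_x; auto using admissible_dxn.
Qed.

Lemma frechet_deriv_eval e t : admissible e ->
  frechet_deriv (fun s x => eval e s x) t (fun x => eval (ds e) t x).
Proof.
  intros W n k eps Heps.
  destruct (eval_bounded (ds (ds (dxn k e))) n t) as [M0 HM0].
  { apply admissible_ds, admissible_ds, admissible_dxn, W. }
  set (M := Rabs M0).
  assert (HM : forall s x, Rabs (s - t) <= 1 -> in_Kn n x ->
     Rabs (eval (ds (ds (dxn k e))) s x) <= M).
  { intros s x H1 H2. generalize (HM0 s x H1 H2) (Rle_abs M0); unfold M; lra. }
  assert (Mpos : 0 <= M) by apply Rabs_pos.
  assert (Hd : 0 < Rmin 1 (eps / (M + 1))).
  { apply Rmin_glb_lt; [lra|]. apply Rdiv_lt_0_compat; lra. }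
  exists (Rmin 1 (eps / (M + 1))). split; auto.
  intros h Hh0 Hh x Hx.
  assert (Hx' := in_Kn_in01 n x Hx).
  generalize (Rmin_l 1 (eps / (M + 1))) (Rmin_r 1 (eps / (M + 1))); intros.
  rewrite Derive_n_difference_quotient by auto.
  rewrite (proj2 (Derive_n_eval (ds e) t k x (admissible_ds e W) Hx')).
  rewrite eval_dxn_ds by auto.
  eapply Rle_trans.
  { apply (difference_quotient_error (fun r => eval (dxn k e) r x)
      (fun r => eval (ds (dxn k e)) r x) (fun r => eval (ds (ds (dxn k e))) r x) t M);
      auto; try lra; intros r _;
      apply is_derive_eval_s; auto using admissible_ds, admissible_dxn. }
  apply Rle_trans with (M * (eps / (M + 1))); [apply Rmult_le_compat_l; lra|].
  assert (eps / (M + 1) * (M + 1) = eps) by (field; lra).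
  assert (0 <= eps / (M + 1)) by (apply Rlt_le, Rdiv_lt_0_compat; lra).
  nra.
Qed.

Lemma smooth_curve_eval e : admissible e -> smooth_curve (fun s x => eval e s x).
Proof.
  intros W. exists (fun j s x => eval (dsn j e) s x). split; [|split].
  - reflexivity.
  - intros j t k x Hx. apply Derive_n_eval; auto using admissible_dsn.
  - intros j t. apply (frechet_deriv_eval (dsn j e)), admissible_dsn, W.
Qed.

Definition damp (s : R) : R := s * / (1 + 16 * (s * s)).

(* [Gf T] fixes the ends of ]0,1[ for every [T], and [d/dT Gf T x = x] at [T = 0]. *)
Definition Gf (T x : R) : R := x + T * x * (1 - x)^2 / ((1 - x)^2 + T^2 * x^2).

Definition dGf (T x : R) : R :=
  1 + T * ((1 - x)^4 - T^2 * x^2 * (1 - x)^2 - 2 * T^2 * x^3 * (1 - x))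
      / ((1 - x)^2 + T^2 * x^2)^2.

Definition damp_expr : expr := Mul Sv (Inv (Add (Cst 1) (Mul (Cst 16) (Mul Sv Sv)))).
Definition one_minus_x : expr := Add (Cst 1) (Mul (Cst (-1)) Xv).
Definition G_expr : expr :=
  Add Xv (Mul (Mul damp_expr (Mul Xv (Mul one_minus_x one_minus_x)))
              (Inv (Add (Mul one_minus_x one_minus_x)
                        (Mul (Mul damp_expr damp_expr) (Mul Xv Xv))))).

Lemma eval_G_expr s x : eval G_expr s x = Gf (damp s) x.
Proof.
  simpl. unfold Gf, damp, Rdiv.
  set (T := s * / (1 + 16 * (s * s))).
  replace ((1 + -1 * x) * (1 + -1 * x) + T * T * (x * x))
    with ((1 - x)^2 + T^2 * x^2) by ring.
  ring.
Qed.

Lemma Rabs_damp_le s : Rabs (damp s) <= 1/8.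
Proof.
  unfold damp.
  assert (Hd : 0 < 1 + 16 * (s * s)) by nra.
  rewrite Rabs_mult, Rabs_inv, (Rabs_pos_eq (1 + _)) by lra.
  apply (Rmult_le_reg_r (1 + 16 * (s * s))); auto.
  rewrite Rmult_assoc, Rinv_l by lra.
  destruct (Rle_dec 0 s).
  - rewrite Rabs_pos_eq by auto. pose proof (pow2_ge_0 (4 * s - 1)). lra.
  - rewrite Rabs_left by lra. pose proof (pow2_ge_0 (4 * s + 1)). lra.
Qed.

Lemma admissible_damp_expr : admissible damp_expr.
Proof.
  assert (Hden : forall s, 1 <= 1 + 16 * (s * s)) by (intros; nra).
  simpl. repeat split.
  - intros s x _. generalize (Hden s); lra.
  - intros n. exists 1. split; [lra|]. intros s x _.
    generalize (Hden s); intros; rewrite Rabs_pos_eq; lra.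
Qed.

Lemma admissible_G_expr : admissible G_expr.
Proof.
  pose proof admissible_damp_expr as [_ [_ [Hnz Hgap]]].
  simpl in *. repeat split; auto.
  - intros s x [H0 H1].
    assert (0 < (1 + -1 * x) * (1 + -1 * x)) by (apply Rmult_lt_0_compat; lra).
    pose proof (Rle_0_sqr (damp s * x)). unfold Rsqr, damp in *. nra.
  - intros n. set (g := 1 / (INR n + 1)). exists (g * g).
    assert (0 < g) by (apply Rdiv_lt_0_compat; generalize (pos_INR n); lra).
    split; [nra|]. intros s x Hx.
    assert (G := in_Kn_gap n x Hx). fold g in G.
    pose proof (Rle_0_sqr (damp s * x)). unfold Rsqr, damp in *.
    assert (g * g <= (1 + -1 * x) * (1 + -1 * x)) by (apply Rmult_le_compat; lra).
    rewrite Rabs_pos_eq; nra.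
Qed.

Lemma Gf_close T x : Rabs T <= 1/8 -> 0 < x < 1 ->
  Rabs (Gf T x - x) <= x / 8 /\ Rabs (Gf T x - x) <= (1 - x) / 2.
Proof.
  intros HT Hx. unfold Gf.
  set (A := 1 - x). set (B := A^2 + T^2 * x^2).
  assert (HA : 0 < A) by (unfold A; lra).
  assert (HB : A^2 <= B) by (unfold B; pose proof (pow2_ge_0 (T * x)); nra).
  assert (HB0 : 0 < B) by nra.
  assert (H0T := Rabs_pos T).
  assert (HxA : 0 <= x * A^2) by (apply Rmult_le_pos; [lra | apply pow2_ge_0]).
  replace (x + T * x * A^2 / B - x) with (T * (x * A^2) / B) by (unfold Rdiv; ring).
  unfold Rdiv. rewrite Rabs_mult, Rabs_mult, Rabs_inv, (Rabs_pos_eq B), (Rabs_pos_eq (x * A^2)) by lra.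
  split; apply (Rmult_le_reg_r B); auto; rewrite Rmult_assoc, Rinv_l by lra.
  - assert (Rabs T * (x * A^2) <= 1/8 * (x * B)) by
      (apply Rmult_le_compat; try nra; apply Rmult_le_compat_l; lra).
    lra.
  - (* AM-GM: [2 |T| x A <= A^2 + T^2 x^2] *)
    assert (Q : 2 * (Rabs T * x) * A <= B).
    { unfold B. pose proof (pow2_ge_0 (A - Rabs T * x)).
      rewrite <- (pow2_abs T). nra. }
    nra.
Qed.

Lemma Gf_in01 T x : Rabs T <= 1/8 -> in01 x -> in01 (Gf T x).
Proof.
  intros HT [H0 H1]. destruct (Gf_close T x HT (conj H0 H1)) as [C1 C2].
  apply Rabs_le_between in C1, C2. unfold in01. lra.
Qed.

Lemma eval_dx_G_expr s x : in01 x -> eval (dx G_expr) s x = dGf (damp s) x.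
Proof.
  intros [H0 H1]. unfold dGf, damp. simpl.
  set (T := s * / (1 + 16 * (s * s))).
  assert (0 < (1 - x)^2) by (apply pow_lt; lra).
  pose proof (pow2_ge_0 (T * x)).
  field; split; nra.
Qed.

Lemma dGf_numerator_bounds T A c : Rabs T <= 1/8 ->
  - (7/8) * (A^2 + c^2)^2 <= T * A^4 - T * c^2 * A^2 - 2 * c^3 * A
  <= 2 * (A^2 + c^2)^2.
Proof.
  intros HT. apply Rabs_le_between in HT.
  assert (0 <= A^4) by (replace (A^4) with ((A * A) * (A * A)) by ring; apply Rle_0_sqr).
  assert (0 <= c^2 * A^2) by (replace (c^2 * A^2) with ((c * A) * (c * A)) by ring; apply Rle_0_sqr).
  assert (0 <= c^2 * (A - 8/13 * c)^2) by (apply Rmult_le_pos; apply pow2_ge_0).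
  assert (0 <= c^2 * (c + A / 2)^2) by (apply Rmult_le_pos; apply pow2_ge_0).
  split; nra.
Qed.

Lemma dGf_bounds T x : Rabs T <= 1/8 -> 0 < x < 1 -> 1/8 <= dGf T x <= 3.
Proof.
  intros HT Hx. unfold dGf.
  set (A := 1 - x). set (c := T * x).
  assert (HB1 : 0 < A^2 + c^2) by (unfold A; pose proof (pow2_ge_0 c); nra).
  assert (HB : 0 < (A^2 + c^2)^2) by (apply pow_lt; exact HB1).
  replace (T * (A^4 - T^2 * x^2 * A^2 - 2 * T^2 * x^3 * A) / (A^2 + T^2 * x^2)^2)
    with ((T * A^4 - T * c^2 * A^2 - 2 * c^3 * A) / (A^2 + c^2)^2)
    by (unfold c in *; field; nra).
  destruct (dGf_numerator_bounds T A c HT).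
  set (q := (T * A^4 - T * c^2 * A^2 - 2 * c^3 * A) / (A^2 + c^2)^2).
  assert (q * (A^2 + c^2)^2 = T * A^4 - T * c^2 * A^2 - 2 * c^3 * A)
    by (unfold q; field; lra).
  split; nra.
Qed.

Lemma filterlim_within_of_bound (f : R -> R) (P : R -> Prop) a l :
  (forall x, Rabs (x - a) < 1/2 -> P x -> Rabs (f x - l) <= 2 * Rabs (x - a)) ->
  filterlim f (within P (locally a)) (locally l).
Proof.
  intros H. apply filterlim_locally. intros eps.
  assert (Hd : 0 < Rmin (eps / 4) (1/2)).
  { apply Rmin_glb_lt; [generalize (cond_pos eps); lra | lra]. }
  exists (mkposreal _ Hd). intros y Hy HPy.
  change (Rabs (y - a) < Rmin (eps / 4) (1/2)) in Hy.
  change (Rabs (f y - l) < eps).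
  generalize (Rmin_l (eps / 4) (1/2)) (Rmin_r (eps / 4) (1/2)) (cond_pos eps); intros.
  assert (Hb := H y ltac:(lra) HPy). lra.
Qed.

Lemma Derive_G_expr s x : in01 x ->
  Derive (fun y => eval G_expr s y) x = dGf (damp s) x.
Proof.
  intros Hx. rewrite <- eval_dx_G_expr by exact Hx.
  apply is_derive_unique, is_derive_eval_x; auto using admissible_G_expr.
Qed.

Lemma inD_G_expr s : inD (fun x => eval G_expr s x).
Proof.
  assert (HT := Rabs_damp_le s).
  split; [split; [|split; [|split]] | split].
  - intros k x Hx. apply Derive_n_eval; auto using admissible_G_expr.
  - intros x Hx. rewrite eval_G_expr. apply Gf_in01; auto.
  - apply filterlim_within_of_bound. intros x Hx Hx1.
    apply Rabs_lt_between' in Hx.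
    rewrite eval_G_expr, (Rabs_left (x - 1)) by lra.
    destruct (Gf_close (damp s) x HT ltac:(lra)) as [_ C].
    apply Rabs_le_between in C. rewrite Rabs_le_between. lra.
  - apply filterlim_within_of_bound. intros x Hx Hx0.
    apply Rabs_lt_between' in Hx.
    rewrite eval_G_expr, !Rminus_0_r, (Rabs_pos_eq x) by lra.
    destruct (Gf_close (damp s) x HT ltac:(lra)) as [C _].
    apply Rabs_le_between in C. rewrite Rabs_le_between. lra.
  - exists (1/8). split; [lra|]. intros x Hx. rewrite Derive_G_expr by exact Hx.
    destruct (dGf_bounds (damp s) x HT Hx); lra.
  - exists 3. intros x Hx. rewrite Derive_G_expr by exact Hx.
    destruct (dGf_bounds (damp s) x HT Hx); lra.
Qed.

Lemma frechet_deriv_ext c t d d' : frechet_deriv c t d ->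
  (forall x, in01 x -> d x = d' x) -> frechet_deriv c t d'.
Proof.
  intros F E n k eps Heps. destruct (F n k eps Heps) as [delta [Hd H]].
  exists delta; split; auto. intros h H0 H1 x Hx.
  rewrite <- (Derive_n_ext_loc d d' k x).
  - apply H; auto.
  - apply filter_imp with (2 := in01_locally x (in_Kn_in01 n x Hx)). auto.
Qed.

Lemma eval_ds_G_expr_0 x : in01 x -> eval (ds G_expr) 0 x = x.
Proof.
  intros [H0 H1]. simpl. field. lra.
Qed.

Lemma in_TidD_id : in_TidD (fun x => x).
Proof.
  exists (fun s x => eval G_expr s x). split; [split|split].
  - apply smooth_curve_eval, admissible_G_expr.
  - apply inD_G_expr.
  - intros x _. simpl. ring.
  - apply frechet_deriv_ext with (d := fun x => eval (ds G_expr) 0 x).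
    + apply frechet_deriv_eval, admissible_G_expr.
    + apply eval_ds_G_expr_0.
Qed.

Lemma inD_increasing f : inD f -> forall a b, in01 a -> in01 b -> a < b -> f a < f b.
Proof.
  intros [[Hs _] [[c [Hc Hd]] _]] a b Ha Hb Hab.
  assert (Hab' : forall x, Rmin a b <= x <= Rmax a b -> in01 x).
  { rewrite Rmin_left, Rmax_right by lra. unfold in01 in *; intros; lra. }
  assert (Hder : forall x, Rmin a b <= x <= Rmax a b -> is_derive f x (Derive f x)).
  { intros x Hx. apply Derive_correct, (Hs 1%nat), Hab', Hx. }
  destruct (MVT_gen f a b (Derive f)) as [z [Hz E]].
  - intros x Hx; apply Hder; lra.
  - intros x Hx. apply continuity_pt_filterlim, (ex_derive_continuous f x).
    eexists; apply Hder, Hx.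
  - assert (c <= Derive f z) by (apply Hd, Hab', Hz).
    assert (0 < Derive f z * (b - a)) by (apply Rmult_lt_0_compat; lra). lra.
Qed.

Lemma inv01_cancel f a : inD f -> in01 a -> inv01 f (f a) = a.
Proof.
  intros H Ha. unfold inv01.
  destruct (epsilon_spec (inhabits 0) (fun x => in01 x /\ f x = f a)) as [Hx E].
  { exists a; auto. }
  set (x := epsilon _ _) in *.
  destruct (Rtotal_order x a) as [L|[L|L]]; auto;
    apply (inD_increasing f H) in L; auto; lra.
Qed.

Lemma frechet_deriv_pointwise c t d n x : frechet_deriv c t d -> in_Kn n x ->
  is_derive (fun s => c s x) t (d x).
Proof.
  intros F Hx. apply is_derive_Reals. intros eps Heps.
  destruct (F n 0%nat (eps / 2) ltac:(lra)) as [delta [Hdel H]].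
  exists (mkposreal _ Hdel). intros h Hh0 Hh1.
  specialize (H h Hh0 Hh1 x Hx). simpl in H. lra.
Qed.

Lemma self_derivative_exp (phi : R -> R) :
  (forall t, is_derive phi t (phi t)) -> forall t, phi t = phi 0 * exp t.
Proof.
  intros Hphi t.
  set (psi := fun t => phi t * exp (- t)).
  assert (Hpsi : forall t, is_derive psi t 0).
  { intros r. replace 0 with (phi r * exp (- r) + phi r * (- exp (- r))) by ring.
    apply (is_derive_mult phi (fun r => exp (- r))); auto.
    - auto_derive; auto; ring.
    - intros; apply Rmult_comm. }
  destruct (MVT_gen psi 0 t (fun _ => 0)) as [z [_ E]].
  - intros; apply Hpsi.
  - intros x _. apply continuity_pt_filterlim, (ex_derive_continuous psi x).
    eexists; apply Hpsi.
  - unfold psi in E. rewrite Ropp_0, exp_0 in E.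
    assert (E' : phi t * exp (- t) = phi 0) by lra.
    rewrite <- E', Rmult_assoc, <- exp_plus, Rplus_opp_l, exp_0. ring.
Qed.

Lemma no_flow_of_id : ~ exists g : R -> R -> R,
  smooth_path_D g /\ exists dg : R -> R -> R,
    (forall t, frechet_deriv g t (dg t)) /\
    (forall t x, in01 x -> dg t (inv01 (g t) x) = x).
Proof.
  intros [g [[_ HD] [dg [Hdg Hv]]]].
  set (phi := fun t => g t (1/2)).
  assert (Hh : in_Kn 1 (1/2)) by (unfold in_Kn; simpl; lra).
  assert (Hphi : forall t, in01 (phi t)).
  { intros t. destruct (HD t) as [[_ [Hi _]] _]. apply Hi, (in_Kn_in01 1), Hh. }
  assert (Hflow : forall t, is_derive phi t (phi t)).
  { intros t. replace (phi t) with (dg t (1/2)).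
    - apply (frechet_deriv_pointwise g t (dg t) 1), Hh. apply Hdg.
    - unfold phi. rewrite <- (inv01_cancel (g t) (1/2) (HD t)) at 1.
      + apply Hv, Hphi.
      + apply (in_Kn_in01 1), Hh. }
  assert (H0 := Hphi 0). destruct H0 as [H0 _].
  assert (E := self_derivative_exp phi Hflow (- ln (phi 0))).
  rewrite exp_Ropp, exp_ln, Rinv_r in E by lra.
  destruct (Hphi (- ln (phi 0))). lra.
Qed.

Theorem theorem8p4 :
  exists v : R -> R -> R,
    smooth_curve v /\ (forall t, in_TidD (v t)) /\
    ~ (exists g : R -> R -> R,
         smooth_path_D g /\
         exists dg : R -> R -> R,
           (forall t, frechet_deriv g t (dg t)) /\
           (forall t x, in01 x -> dg t (inv01 (g t) x) = v t x)).
Proof.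
  exists (fun _ x => x). split; [|split].
  - exact (smooth_curve_eval Xv I).
  - intros _. exact in_TidD_id.
  - exact no_flow_of_id.
Qed.
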